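(* Let $(S,* )$ be a finite multisemigroup containing two different elements $a$ and $b$ such that $a*a=\{a\}$ and either $\{a,b\}\subseteq a*b$ or $\{a,b\}\subseteq b*a$. Then $(S,* )$ does not admit any deformation.
   Context: A multisemigroup is a set $S$ with a map $*:S\times S\to 2^S$ such that $\bigcup_{s\in x*y}s*z=\bigcup_{t\in y*z}x*t$ for all $x,y,z\in S$. A finitary multisemigroup with multiplicities on a non-empty set $S$ is a map $\mu:S\times S\to\{\text{functions }S\to\mathrm{Card}_{\aleph_0}\}$ (where $\mathrm{Card}_{\aleph_0}$ is the set of cardinals $\le\aleph_0$ with truncated cardinal arithmetic), $(s,t)\mapsto\mu_{s,t}$, such that every value $\mu_{r,s}(t)$ is finite, $\{t:\mu_{r,s}(t)\neq0\}$ is finite for all $r,s$, and for all $r,s,t\in S$: $\sum_{i\in S}\mu_{s,t}(i)\mu_{r,i}=\sum_{j\in S}\mu_{r,s}(j)\mu_{j,t}$ as functions on $S$ (where $\lambda\nu$ is the pointwise sum of $\lambda$ copies of $\nu$). A deformation of a finite multisemigroup $(S,* )$ is a finitary multisemigroup with multiplicities $(S,\mu)$ such that for all $x,y,z\in S$: $z\in x*y$ if and only if $\mu_{x,y}(z)\neq0$. *)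

From mathcomp Require Import all_boot.
Set Implicit Arguments. Unset Strict Implicit. Unset Printing Implicit Defensive.

Definition is_multisemigroup (T : finType) (mul : T -> T -> {set T}) : Prop :=
  forall x y z : T,
    \bigcup_(s in mul x y) mul s z = \bigcup_(t in mul y z) mul x t.

(* Since T is finite and every value mu_{r,s}(t) is required to be finite,
   the values are natural numbers, the finite-support condition is automatic,
   and the truncated cardinal arithmetic coincides with nat arithmetic.
   mu r s t = mu_{r,s}(t). *)
Definition is_finitary_mult (T : finType) (mu : T -> T -> T -> nat) : Prop :=
  forall r s t u : T,
    \sum_(i : T) mu s t i * mu r i u = \sum_(j : T) mu r s j * mu j t u.

Definition is_deformation (T : finType) (mul : T -> T -> {set T})
    (mu : T -> T -> T -> nat) : Prop :=
  is_finitary_mult mu /\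
  forall x y z : T, (z \in mul x y) <-> (mu x y z != 0).

From mathcomp Require Import all_boot zify.
Set Implicit Arguments. Unset Strict Implicit. Unset Printing Implicit Defensive.

(* If [mu a a] is supported on [a], evaluating the associativity law at [(a, a, b, a)] gives
   [mu a a a * mu a b a = \sum_i mu a b i * mu a i a], whose right side also contains the
   extra term [mu a b b * mu a b a]; so [a * b] cannot contain both [a] and [b]
   (and symmetrically for [b * a]). A deformation would see both. *)

Lemma leq_add_sum_pair (T : finType) (F : T -> nat) (a b : T) :
  a != b -> F a + F b <= \sum_i F i.
Proof.
move=> neq_ab; rewrite (bigD1 a) //= (bigD1 b) /=; last by rewrite eq_sym.
by rewrite addnA leq_addr.
Qed.

Section IdempotentSupport.

Variables (T : finType) (mu : T -> T -> T -> nat) (a : T).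
Hypothesis mu_assoc : is_finitary_mult mu.
Hypothesis mu_aa_supp : forall i, i != a -> mu a a i = 0.

Lemma sum_mu_aa (F : T -> nat) : \sum_i mu a a i * F i = mu a a a * F a.
Proof. by rewrite (bigD1 a) //= big1 ?addn0 // => i /mu_aa_supp ->. Qed.

Lemma mu_idem_left_exclusive (b : T) : a != b -> mu a b a * mu a b b = 0.
Proof.
move=> neq_ab; have := mu_assoc a a b a; rewrite sum_mu_aa.
have := leq_add_sum_pair (fun i => mu a b i * mu a i a) neq_ab => /= le_sum eq_sum.
by move: le_sum; rewrite eq_sum; lia.
Qed.

Lemma mu_idem_right_exclusive (b : T) : a != b -> mu b a a * mu b a b = 0.
Proof.
move=> neq_ab; have := mu_assoc b a a a; rewrite sum_mu_aa.
have := leq_add_sum_pair (fun j => mu b a j * mu j a a) neq_ab => /= le_sum eq_sum.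
by move: le_sum; rewrite -eq_sum; lia.
Qed.

End IdempotentSupport.

Lemma deformation_mem (T : finType) (mul : T -> T -> {set T}) mu :
  is_deformation mul mu -> forall x y z, (z \in mul x y) = (mu x y z != 0).
Proof. by move=> [_ supp] x y z; apply/idP/idP => /supp. Qed.

Theorem corollary13 (T : finType) (mul : T -> T -> {set T})
    (Hms : is_multisemigroup mul) (a b : T) (hab : a != b)
    (haa : mul a a = [set a])
    (hab2 : [set a; b] \subset mul a b \/ [set a; b] \subset mul b a) :
  ~ (exists mu : T -> T -> T -> nat, is_deformation mul mu).
Proof.
move=> [mu def_mu]; have mem_mu := deformation_mem def_mu.
have mu_assoc : is_finitary_mult mu by case: def_mu.
have mu_aa_supp i : i != a -> mu a a i = 0.
  by move=> neq_ia; apply/eqP/negPn; rewrite -mem_mu haa in_set1.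
have [ina inb] : a \in [set a; b] /\ b \in [set a; b] by rewrite !inE !eqxx orbT.
case: hab2 => /subsetP sub.
- have := mu_idem_left_exclusive mu_assoc mu_aa_supp hab.
  by apply/eqP; rewrite muln_eq0 negb_or -!mem_mu !sub.
- have := mu_idem_right_exclusive mu_assoc mu_aa_supp hab.
  by apply/eqP; rewrite muln_eq0 negb_or -!mem_mu !sub.
Qed.
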